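(* Fix an integer $n\ge 0$. Let $\mu,\nu,\lambda$ be partitions such that $\ell(\mu)>n$, $\ell(\nu)>n$, the border strip $R_\mu$ exists, is nonempty, and $\nu=\mu\setminus R_\mu$, and the border strip $R_\nu$ exists, is nonempty, and $\lambda=\nu\setminus R_\nu$. Then $c(R_\mu)>c(R_\nu)$.
   Context: For a partition $\lambda$ with $\ell(\lambda)>n$ (where $\ell$ is the number of nonzero parts), $R_\lambda$ denotes the border strip (connected skew Young diagram containing no $2\times2$ square) consisting of $2(\ell(\lambda)-n-1)$ boxes along the rim (south-east boundary) of the Young diagram of $\lambda$, starting at the first (leftmost) box of the last row of $\lambda$ and proceeding along the rim, if it exists. $c(R)$ denotes the number of columns occupied by a border strip $R$. *)

From mathcomp Require Import all_boot.
Set Implicit Arguments. Unset Strict Implicit. Unset Printing Implicit Defensive.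

(* A partition is a weakly decreasing sequence of positive naturals
   (its nonzero parts); ell(lambda) = size lambda. *)
Definition is_partition (s : seq nat) : bool :=
  sorted geq s && all (fun x => 0 < x) s.

(* Boxes are pairs (row, column), 0-indexed, English convention:
   row i contains columns 0 .. s_i - 1. *)
Definition in_diag (s : seq nat) (b : nat * nat) : bool := b.2 < nth 0 s b.1.

(* Walk along the rim (south-east boundary) from box (i,j) towards the
   north-east: go right if the box to the right is in the diagram,
   otherwise go up (if possible), otherwise stop. [fuel] bounds the length. *)
Fixpoint rim_from (s : seq nat) (fuel : nat) (b : nat * nat) : seq (nat * nat) :=
  match fuel with
  | 0 => [::]
  | f.+1 =>
      b :: (if b.2.+1 < nth 0 s b.1 then rim_from s f (b.1, b.2.+1)
            else if b.1 is i'.+1 then rim_from s f (i', b.2) else [::])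
  end.

(* The whole rim, starting at the first (leftmost) box of the last row.
   The rim has at most |s| = sumn s boxes, so this fuel suffices. *)
Definition rim (s : seq nat) : seq (nat * nat) :=
  if s is [::] then [::] else rim_from s (sumn s) ((size s).-1, 0).

(* R_lambda: the border strip of 2(ell(lambda) - n - 1) boxes along the rim,
   starting at the first box of the last row, if it exists. *)
Definition R_strip (n : nat) (s : seq nat) : option (seq (nat * nat)) :=
  let k := 2 * (size s - n - 1) in
  if k <= size (rim s) then Some (take k (rim s)) else None.

Definition ncols (R : seq (nat * nat)) : nat := size (undup (map snd R)).

Definition diag_remove (mu lam : seq nat) (R : seq (nat * nat)) : Prop :=
  forall b : nat * nat, in_diag lam b = in_diag mu b && (b \notin R).

From mathcomp Require Import all_boot zify.

(* A rim walk starting at box (i, j) moves one step right or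
   one step up at every step, so its t-th box b satisfies the diagonal
   identity  b.row + t = i + b.col, and the columns it visits form the
   interval [j, last.col].  A nonempty strip R_s of s is such a walk from
   ((size s).-1, 0) of length 2(size s - n - 1); hence c(R_s) = L.col + 1
   for its last box L.  Now let L be the last box of R_mu and suppose
   c(R_nu) >= c(R_mu): then R_nu has a box X in column L.col, say at
   position t.  X lies in nu while L was removed from mu to obtain nu, so
   by column monotonicity of partitions X.row < L.row.  Feeding the two
   diagonal identities, t < 2(size nu - n - 1) and size nu <= size mu
   (nu is contained in mu) into linear arithmetic gives a contradiction. *)

Lemma sorted_nth_mono (s : seq nat) (i j : nat) :
  sorted geq s -> i <= j -> nth 0 s j <= nth 0 s i.
Proof.
move=> s_sorted; elim: j => [|j IHj]; first by rewrite leqn0 => /eqP->.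
rewrite leq_eqVlt => /orP[/eqP-> //|]; rewrite ltnS => /IHj.
apply: leq_trans; elim: s j s_sorted {IHj} => [|x s IHs] [|j] //=.
  by case: s IHs => [|y s] //= _ /andP[].
by move/path_sorted; apply: IHs.
Qed.

Lemma in_diag_above (s : seq nat) (b c : nat * nat) :
  sorted geq s -> in_diag s b -> ~~ in_diag s c -> b.2 = c.2 -> b.1 < c.1.
Proof.
move=> s_sorted b_in c_out same_col; rewrite ltnNge; apply/negP=> c_above.
move: c_out; rewrite /in_diag -same_col.
by rewrite (leq_trans b_in (sorted_nth_mono _ _ _ s_sorted c_above)).
Qed.

Lemma in_diag_last_row (s : seq nat) :
  is_partition s -> 0 < size s -> in_diag s ((size s).-1, 0).
Proof.
case/andP=> _ s_pos s_ne; rewrite /in_diag /=.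
by apply: (allP s_pos); rewrite mem_nth // prednK.
Qed.

Lemma size_diag_remove (mu nu : seq nat) (R : seq (nat * nat)) :
  is_partition nu -> diag_remove mu nu R -> size nu <= size mu.
Proof.
case/andP=> _ nu_pos remove; rewrite leqNgt; apply/negP=> mu_short.
have := remove (size mu, 0); rewrite /in_diag /= (nth_default 0 (leqnn (size mu))).
by rewrite (allP nu_pos _ (mem_nth 0 mu_short)).
Qed.

Lemma rim_fromS (s : seq nat) (f i j : nat) : rim_from s f.+1 (i, j) = (i, j) ::
  (if j.+1 < nth 0 s i then rim_from s f (i, j.+1)
   else if i is i'.+1 then rim_from s f (i', j) else [::]).
Proof. by []. Qed.

Lemma take_rim_from (s : seq nat) (f k : nat) (b : nat * nat) :
  take k (rim_from s f b) = rim_from s (minn k f) b.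
Proof.
elim: f k b => [|f IHf] [|k] [i j] //=.
rewrite minnSS /=; case: ifP => _; first by rewrite IHf.
by case: i => [|i] //; rewrite IHf.
Qed.

Lemma rim_from_in_diag (s : seq nat) (f : nat) (b : nat * nat) :
  sorted geq s -> in_diag s b -> all (in_diag s) (rim_from s f b).
Proof.
move=> s_sorted; elim: f b => [|f IHf] [i j] //= b_in; rewrite b_in /=.
case: ifP => [next_in|_]; first by apply: IHf.
case: i b_in => [|i] // b_in; apply: IHf.
by apply: leq_trans b_in _; apply: sorted_nth_mono.
Qed.

(* Diagonal identity: the t-th box of a walk from b has moved t steps,
   each either one column right or one row up. *)
Lemma rim_from_diagonal (s : seq nat) (f t : nat) (b x0 : nat * nat) :
  t < size (rim_from s f b) ->
  (nth x0 (rim_from s f b) t).1 + t + b.2 = b.1 + (nth x0 (rim_from s f b) t).2.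
Proof.
elim: f b t => [|f IHf] [i j] [|t] //=; first by rewrite addn0.
case: ifP => _; first by move/IHf => /=; lia.
by case: i => [|i] //= /IHf /=; lia.
Qed.

Lemma last_rim_from (s : seq nat) (f : nat) (b c : nat * nat) :
  last c (rim_from s f.+1 b) = last b (rim_from s f.+1 b).
Proof. by case: b => i j; rewrite rim_fromS. Qed.

(* The columns visited by a nonempty walk from b form the interval
   [b.col, last.col], since the column grows by at most one per step. *)
Lemma rim_from_cols (s : seq nat) (f y : nat) (b : nat * nat) :
  (y \in map snd (rim_from s f.+1 b)) = (b.2 <= y <= (last b (rim_from s f.+1 b)).2).
Proof.
elim: f b y => [|f IHf] [i j] y.
  by rewrite rim_fromS; case: ifP => _; last case: i => [|i];
     rewrite /= inE; apply/idP/idP; lia.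
have start_le_last (c : nat * nat) : c.2 <= (last c (rim_from s f.+1 c)).2.
  by have := IHf c c.2; case: c => i' j'; rewrite rim_fromS /= inE eqxx => /esym/andP[].
rewrite rim_fromS map_cons inE last_cons.
case: ifP => _; last case: i => [|i].
- rewrite IHf last_rim_from; move: (start_le_last (i, j.+1)).
  by case: (last _ _) => /= ? ? ?; apply/idP/idP; lia.
- by rewrite /= ?in_nil orbF; apply/idP/idP; lia.
rewrite IHf last_rim_from; move: (start_le_last (i, j)).
by case: (last _ _) => /= ? ? ?; apply/idP/idP; lia.
Qed.

Lemma ncols_interval (R : seq (nat * nat)) (M : nat) :
  (forall y, (y \in map snd R) = (y <= M)) -> ncols R = M.+1.
Proof.
move=> cols_R; rewrite /ncols -(size_iota 0 M.+1).
apply/eqP; rewrite -uniq_size_uniq ?undup_uniq ?iota_uniq // => y.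
by rewrite mem_undup cols_R mem_iota.
Qed.

Section Strip.

Context {n : nat} {s : seq nat} {R : seq (nat * nat)}.
Hypotheses (s_long : n < size s) (s_strip : R_strip n s = Some R) (R_ne : R != [::]).

Lemma strip_size : size R = 2 * (size s - n - 1).
Proof.
move: s_strip; rewrite /R_strip; case: ifP => // fits [<-]; exact: size_takel fits.
Qed.

Lemma strip_rim_from : exists f, R = rim_from s f.+1 ((size s).-1, 0).
Proof.
move: s_strip R_ne; rewrite /R_strip; case: ifP => // _ [<-].
have -> : rim s = rim_from s (sumn s) ((size s).-1, 0).
  by case: s s_long.
by rewrite take_rim_from; case: (minn _ _) => [|f] // _; exists f.
Qed.

Lemma strip_diagonal (t : nat) (x0 : nat * nat) : t < size R ->
  (nth x0 R t).1 + t = (size s).-1 + (nth x0 R t).2.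
Proof.
have [f ->] := strip_rim_from.
by move/rim_from_diagonal => /(_ x0) /=; rewrite addn0.
Qed.

Lemma strip_in_diag : is_partition s -> all (in_diag s) R.
Proof.
move=> s_part; have [f ->] := strip_rim_from.
apply: rim_from_in_diag; first by case/andP: s_part.
exact: in_diag_last_row (leq_ltn_trans (leq0n n) s_long).
Qed.

Lemma strip_cols (y : nat) (x0 : nat * nat) :
  (y \in map snd R) = (y <= (last x0 R).2).
Proof. by have [f ->] := strip_rim_from; rewrite rim_from_cols last_rim_from. Qed.

Lemma strip_ncols (x0 : nat * nat) : ncols R = (last x0 R).2.+1.
Proof. by apply: ncols_interval => y; apply: strip_cols. Qed.

Lemma strip_col_box (y : nat) (x0 : nat * nat) :
  y < ncols R -> exists2 t, t < size R & (nth x0 R t).2 = y.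
Proof.
rewrite (strip_ncols x0) ltnS -(strip_cols y x0) => /(nthP 0) [t].
by rewrite size_map => t_lt; rewrite (nth_map x0) //; exists t.
Qed.

End Strip.

Theorem lemma2p1 (n : nat) (mu nu lam : seq nat) (Rmu Rnu : seq (nat * nat)) :
  is_partition mu -> is_partition nu -> is_partition lam ->
  n < size mu -> n < size nu ->
  R_strip n mu = Some Rmu -> Rmu != [::] -> diag_remove mu nu Rmu ->
  R_strip n nu = Some Rnu -> Rnu != [::] -> diag_remove nu lam Rnu ->
  ncols Rnu < ncols Rmu.
Proof.
move=> mu_part nu_part _ mu_long nu_long mu_strip Rmu_ne mu_nu nu_strip Rnu_ne _.
pose x0 := (0, 0); pose L := last x0 Rmu.
have Rmu_pos : 0 < size Rmu by rewrite lt0n size_eq0.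
have L_nth : L = nth x0 Rmu (size Rmu).-1 by rewrite nth_last.
have L_in : L \in Rmu by rewrite L_nth mem_nth // prednK.
have L_out : ~~ in_diag nu L by rewrite mu_nu L_in andbF.
have L_diag : L.1 + (size Rmu).-1 = (size mu).-1 + L.2.
  by rewrite L_nth (strip_diagonal mu_long mu_strip Rmu_ne) // ltn_predL.
rewrite (strip_ncols mu_long mu_strip Rmu_ne x0) -/L ltnS leqNgt; apply/negP=> L_col.
have [t t_lt X_col] := strip_col_box nu_long nu_strip Rnu_ne _ x0 L_col.
have X_in : in_diag nu (nth x0 Rnu t).
  exact: allP (strip_in_diag nu_long nu_strip Rnu_ne nu_part) _ (mem_nth x0 t_lt).
have X_above := in_diag_above _ _ _ (proj1 (andP nu_part)) X_in L_out X_col.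
have X_diag := strip_diagonal nu_long nu_strip Rnu_ne _ x0 t_lt.
have := strip_size mu_strip; have := strip_size nu_strip.
have := size_diag_remove _ _ _ nu_part mu_nu.
lia.
Qed.
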